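(* Let $A$ be an $n$-qubit algorithm with $A|0^n\rangle=\sum_{x\in\{0,1\}^n}\alpha_x|x\rangle$, let $f:\{0,1\}^n\to\{0,1\}$ partition the basis states into good states $G=\{x:f(x)=1\}$ and bad states $B=\{x:f(x)=0\}$, let $\hat{\mathcal{O}}_p$ be a bounded-error oracle for $f$ with $p\in(1/2,1)$, and let $\delta>0$. For an appropriate $k=O\big(\frac{2p}{(p-1/2)^2}\log(1/\delta)\big)$, let $\hat A$ be the circuit on registers $R_1$ ($n$ qubits), $R_{21},\dots,R_{2k}$ (one qubit each) and $R_{maj}$ (one qubit), all initialised to $|0\rangle$, that: applies $A$ to $R_1$; for $i=1,\dots,k$ applies $\hat{\mathcal{O}}_p$ to $R_1R_{2i}$; and finally applies a majority gate controlled on $R_1$, with inputs $R_{21},\dots,R_{2k}$, writing the majority value into $R_{maj}$. Then, ignoring the states of ancill\ae, $$\hat A|0^{n+k+1}\rangle=\sum_{x\in G}\alpha_x|x\rangle\big[\eta^g_{x0}|\cdots\rangle|0\rangle+\eta^g_{x1}|\cdots\rangle|1\rangle\big]+\sum_{x\in B}\alpha_x|x\rangle\big[\eta^b_{x0}|\cdots\rangle|0\rangle+\eta^b_{x1}|\cdots\rangle|1\rangle\big]$$ (the last qubit being $R_{maj}$, and $|\cdots\rangle$ denoting normalized states of the intermediate registers), such that $|\eta^g_{x0}|^2\le\delta$ and $|\eta^b_{x1}|^2\le\delta$ for all relevant $x$.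
   Context: A bounded-error oracle $\hat{\mathcal{O}}_p$ for $f$ (with $p\in(1/2,1)$) is a unitary acting on $|x\rangle|0\rangle$ ($x\in\{0,1\}^n$, one output qubit) as $|x\rangle|0\rangle\mapsto|x\rangle(a_{x,0}|0\rangle+a_{x,1}|1\rangle)$ with $|a_{x,f(x)}|^2\ge p$, i.e. it marks $x$ correctly with probability at least $p$. The majority gate sets the output bit to $1$ iff at least $k/2$ of its $k$ input bits are $1$. *)

From mathcomp Require Import all_boot all_algebra.
From mathcomp Require Export complex.
From mathcomp Require Export reals exp.
Set Implicit Arguments. Unset Strict Implicit. Unset Printing Implicit Defensive.
Import GRing.Theory Num.Theory.
Local Open Scope ring_scope.
Local Open Scope complex_scope.

(* Computational basis of an n-qubit register: bit strings x in {0,1}^n. *)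
Definition bits (n : nat) := {ffun 'I_n -> bool}.

Section Quantum.
Variable R : realType.
Local Notation C := (R[i]).

(* A linear operator on the Hilbert space with orthonormal basis T,
   given by its matrix entries U out in = <out|U|in>. *)
Definition op (T : finType) := T -> T -> C.
Definition vec (T : finType) := T -> C.

Definition apply_op (T : finType) (U : op T) (v : vec T) : vec T :=
  fun i => \sum_j U i j * v j.

(* Unitarity: U^dagger U = I (for finite dimension this is unitarity). *)
Definition unitary (T : finType) (U : op T) : Prop :=
  forall i j : T, \sum_k (U k i)^* * U k j = (i == j)%:R.

Definition ket (T : finType) (t : T) : vec T := fun s => (s == t)%:R.

Definition zero_bits (n : nat) : bits n := [ffun => false].

(* Bounded-error oracle O_p for f with amplitudes a:
   |x>|0> |-> |x>(a x 0 |0> + a x 1 |1>), |a x (f x)|^2 >= p. *)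
Definition bounded_error_oracle (n : nat) (f : bits n -> bool) (p : R)
    (O : op (bits n * bool)%type) (a : bits n -> bool -> C) : Prop :=
  unitary O /\
  (forall (x x' : bits n) (b : bool),
      O (x', b) (x, false) = (x' == x)%:R * a x b) /\
  (forall x, p%:C <= `|a x (f x)| ^+ 2).

Definition majority (k : nat) (y : bits k) : bool :=
  (k <= 2 * #|[set i | y i]|)%N.

(* Registers of hat A: R1 (n qubits), R21..R2k (one qubit each), Rmaj. *)
Definition regs (n k : nat) := (bits n * (bits k * bool))%type.

Definition lift_R1 (n k : nat) (A : op (bits n)) : op (regs n k) :=
  fun s t => A s.1 t.1 * (s.2 == t.2)%:R.

Definition lift_R1R2i (n k : nat) (O : op (bits n * bool)%type) (i : 'I_k)
    : op (regs n k) :=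
  fun s t => O (s.1, s.2.1 i) (t.1, t.2.1 i)
             * [forall j, (j != i) ==> (s.2.1 j == t.2.1 j)]%:R
             * (s.2.2 == t.2.2)%:R.

(* Majority gate with inputs R21..R2k, XOR-ing maj into Rmaj
   (a permutation of the basis). *)
Definition maj_gate (n k : nat) : op (regs n k) :=
  fun s t => ((s.1 == t.1) && (s.2.1 == t.2.1)
              && (s.2.2 == t.2.2 (+) majority t.2.1))%:R.

Definition hatA_state (n k : nat) (A : op (bits n)) (O : op (bits n * bool)%type)
    : vec (regs n k) :=
  apply_op (@maj_gate n k)
    (foldl (fun v (i : 'I_k) => apply_op (@lift_R1R2i n k O i) v)
       (apply_op (@lift_R1 n k A) (ket (zero_bits n, (zero_bits k, false))))
       (enum 'I_k)).

End Quantum.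

From mathcomp Require Import all_boot all_algebra.
From mathcomp Require Import complex reals exp sequences.
From mathcomp Require Import ring lra zify order.
Set Implicit Arguments. Unset Strict Implicit. Unset Printing Implicit Defensive.
Import Order.TTheory GRing.Theory Num.Theory.
Local Open Scope ring_scope.
Local Open Scope complex_scope.

(* After A and the k oracle calls, R_1 R_21 .. R_2k holds
   sum_x alpha_x |x> sum_y (prod_i a_x(y_i)) |y>, because every call writes into
   a fresh ancilla; the majority gate then files |x>|y> under the branch
   m = maj(y).  Take k = 2h.  A string y with the wrong majority has at least h
   wrong bits, so with q = |a_x(f x)|^2 >= p its weight prod_i |a_x(y_i)|^2 is at
   most (q(1-q))^h; summing over all 4^h strings, the wrong branch has weight at
   most (4q(1-q))^h <= (1 - 4(p-1/2)^2)^h <= exp(-4(p-1/2)^2 h), which is below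
   delta as soon as h > ln(1/delta) / (4(p-1/2)^2).  Normalising each branch
   yields eta (its norm) and the intermediate states. *)

Definition clear_bit (k : nat) (i : 'I_k) (y : bits k) : bits k :=
  [ffun j => (j != i) && y j].

Section Circuit.
Variables (R : realType) (n k : nat).
Variables (O : op R (bits n * bool)%type) (a : bits n -> bool -> R[i]).
Hypothesis O_ket0 :
  forall (x x' : bits n) (b : bool), O (x', b) (x, false) = (x' == x)%:R * a x b.

(* The state reached from alpha (x) |0..0> by the oracle calls on the ancillas listed in s. *)
Definition partial_state (alpha : vec R (bits n)) (s : seq 'I_k) : vec R (regs n k) :=
  fun t => alpha t.1 * (t.2.2 == false)%:R * [forall j, (j \notin s) ==> ~~ t.2.1 j]%:R
           * \prod_(i <- s) a t.1 (t.2.1 i).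

Lemma lift_R1_ket0 (A : op R (bits n)) :
  apply_op (@lift_R1 R n k A) (ket R (zero_bits n, (zero_bits k, false)))
  =1 partial_state (apply_op A (ket R (zero_bits n))) [::].
Proof.
move=> [x [y m]]; rewrite /apply_op /partial_state /ket /lift_R1 /=.
rewrite (bigD1 (zero_bits n, (zero_bits k, false))) //= big1 ?addr0 => [|t /negbTE ->];
  last by rewrite mulr0.
rewrite (bigD1 (zero_bits n)) //= big1 ?addr0 => [|j /negbTE ->]; last by rewrite mulr0.
rewrite big_nil !eqxx !mulr1 xpair_eqE.
have -> : [forall j, (j \notin [::]) ==> ~~ y j] = (y == zero_bits k).
  apply/forallP/eqP => [y0|-> j]; last by rewrite ffunE.
  by apply/ffunP => j; rewrite ffunE; apply/negbTE/y0.
by case: (y == _); case: (m == _); rewrite ?(mulr0, mulr1).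
Qed.

Lemma partial_state_ancilla_set alpha s (i : 'I_k) (t : regs n k) :
  i \notin s -> t.2.1 i -> partial_state alpha s t = 0.
Proof.
move=> i_s ti; rewrite /partial_state.
suff /negbTE -> : ~~ [forall j, (j \notin s) ==> ~~ t.2.1 j] by rewrite mulr0 mul0r.
by apply/forallPn; exists i; rewrite i_s ti.
Qed.

Lemma lift_R1R2i_ancilla0 (i : 'I_k) (t u : regs n k) : ~~ u.2.1 i ->
  lift_R1R2i O i t u = (u == (t.1, (clear_bit i t.2.1, t.2.2)))%:R * a t.1 (t.2.1 i).
Proof.
case: t u => [x [y m]] [x' [y' m']] /= /negbTE y'i.
rewrite /lift_R1R2i /= y'i O_ket0 !xpair_eqE [x' == x]eq_sym [m' == m]eq_sym.
have -> : [forall j, (j != i) ==> (y j == y' j)] = (y' == clear_bit i y).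
  rewrite /clear_bit; apply/forallP/eqP => [eq_y|-> j]; last by rewrite ffunE; case: (j != i); rewrite /= ?eqxx.
  apply/ffunP => j; rewrite ffunE; case: eqVneq => [->|j_i] //=.
  by apply/esym/eqP; apply: (implyP (eq_y j)).
by case: eqVneq => [->|]; case: (y' == _); case: (m == m'); rewrite ?(mulr1, mulr0, mul0r, mul1r).
Qed.

Lemma partial_state_rcons alpha s (i : 'I_k) x y m : i \notin s ->
  partial_state alpha (rcons s i) (x, (y, m))
  = a x (y i) * partial_state alpha s (x, (clear_bit i y, m)).
Proof.
move=> i_s; rewrite /partial_state /= big_rcons /=.
have -> : \prod_(j <- s) a x (clear_bit i y j) = \prod_(j <- s) a x (y j).
  apply: eq_big_seq => j j_s; rewrite ffunE.
  by case: eqVneq j_s i_s => [-> ->|].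
have -> : [forall j, (j \notin s) ==> ~~ clear_bit i y j]
          = [forall j, (j \notin rcons s i) ==> ~~ y j].
  apply: eq_forallb => j; rewrite mem_rcons in_cons ffunE.
  by case: eqVneq => [->|] //=; rewrite implybT.
by rewrite [RHS]mulrC -!mulrA.
Qed.

Lemma lift_R1R2i_partial_state alpha s (i : 'I_k) : i \notin s ->
  apply_op (lift_R1R2i O i) (partial_state alpha s) =1 partial_state alpha (rcons s i).
Proof.
move=> i_s [x [y m]]; rewrite partial_state_rcons // /apply_op.
rewrite (bigD1 (x, (clear_bit i y, m))) //= big1 ?addr0 => [|u u_ne].
  by rewrite lift_R1R2i_ancilla0 ?ffunE ?eqxx ?mul1r.
case ui : (u.2.1 i); first by rewrite (partial_state_ancilla_set _ i_s) ?ui ?mulr0.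
by rewrite lift_R1R2i_ancilla0 ?ui // (negbTE u_ne) !mul0r.
Qed.

Lemma oracle_calls_partial_state (v0 : vec R (regs n k)) alpha s : uniq s ->
  v0 =1 partial_state alpha [::] ->
  foldl (fun v (i : 'I_k) => apply_op (lift_R1R2i O i) v) v0 s =1 partial_state alpha s.
Proof.
move=> + v0E; elim/last_ind: s => [//|s i IH].
rewrite rcons_uniq foldl_rcons => /andP[i_s s_uniq] t.
rewrite -lift_R1R2i_partial_state // /apply_op.
by apply: eq_bigr => u _; rewrite IH.
Qed.

Definition majority_branch (x : bits n) (m : bool) : vec R (bits k) :=
  fun y => (\prod_i a x (y i)) * (m == majority y)%:R.

Lemma hatA_stateE (A : op R (bits n)) x y m :
  @hatA_state R n k A O (x, (y, m))
  = apply_op A (ket R (zero_bits n)) x * majority_branch x m y.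
Proof.
(* The majority gate permutes the basis: only (x, y, m (+) majority y) is mapped to (x, y, m). *)
rewrite /hatA_state {1}/apply_op (bigD1 (x, (y, m (+) majority y))) //=.
rewrite big1 ?addr0 => [|[x' [y' m']] /=]; last first.
  rewrite /maj_gate /=; case: andP => [[/andP[/eqP <- /eqP <-] /eqP ->]|]; last by rewrite mul0r.
  by rewrite addbK eqxx.
rewrite /maj_gate /= addbK !eqxx mul1r.
rewrite (oracle_calls_partial_state (enum_uniq _) (lift_R1_ket0 A)) /partial_state /=.
have -> : [forall j, (j \notin enum 'I_k) ==> ~~ y j] by apply/forallP => j; rewrite mem_enum.
rewrite big_enum /= mulr1 /majority_branch.
have -> : (m (+) majority y == false) = (m == majority y) by case: m; case: majority.
by rewrite -mulrA [_%:R * _]mulrC.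
Qed.

End Circuit.

Section Normalize.
Variables (R : rcfType) (T : finType).

Definition sqnorm (u : T -> R[i]) : R[i] := \sum_y `|u y| ^+ 2.

(* The zero vector is sent to the basis vector t0, so the result always has norm 1. *)
Definition normalize (t0 : T) (u : T -> R[i]) : T -> R[i] :=
  if sqnorm u == 0 then fun y => (y == t0)%:R else fun y => u y / sqrtc (sqnorm u).

Lemma sqnorm_ge0 (u : T -> R[i]) : 0 <= sqnorm u.
Proof. by apply: sumr_ge0 => y _; rewrite exprn_ge0. Qed.

Lemma sqr_norm_sqrtc (z : R[i]) : 0 <= z -> `|sqrtc z| ^+ 2 = z.
Proof. by move=> z_ge0; rewrite ger0_norm ?sqrtc_ge0 // sqr_sqrtc. Qed.

Lemma normalizeK (t0 : T) (u : T -> R[i]) y :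
  u y = sqrtc (sqnorm u) * normalize t0 u y.
Proof.
rewrite /normalize; have [u0 | u_neq0] := eqVneq (sqnorm u) 0.
  have /eqP : `|u y| ^+ 2 = 0.
    by apply: (psumr_eq0P _ u0) => // z _; rewrite exprn_ge0.
  by rewrite expf_eq0 normr_eq0 => /andP[_ /eqP ->]; rewrite u0 sqrtc0 mul0r.
by rewrite mulrC divfK // sqrtc_eq0.
Qed.

Lemma sqnorm_normalize (t0 : T) (u : T -> R[i]) : sqnorm (normalize t0 u) = 1.
Proof.
rewrite /normalize; have [u0 | u_neq0] := eqVneq (sqnorm u) 0.
  rewrite /sqnorm (bigD1 t0) //= eqxx normr1 expr1n big1 ?addr0 // => y /negbTE ->.
  by rewrite normr0 expr0n.
rewrite /sqnorm; under eq_bigr do rewrite normf_div exprMn exprVn sqr_norm_sqrtc ?sqnorm_ge0 //.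
by rewrite -mulr_suml divff.
Qed.

End Normalize.

Lemma expr_mixed_le (F : numDomainType) (u v : F) (h b c : nat) :
  0 <= u -> u <= v -> (b + c = 2 * h)%N -> (h <= b)%N -> u ^+ b * v ^+ c <= (u * v) ^+ h.
Proof.
move=> u_ge0 le_uv bc hb.
have v_ge0 : 0 <= v by apply: le_trans le_uv.
have [d eb] : exists d, b = (h + d)%N by exists (b - h)%N; lia.
have [-> d_le] : c = (h - d)%N /\ (d <= h)%N by lia.
rewrite {}eb.
rewrite exprD exprMn -mulrA ler_wpM2l ?exprn_ge0 //.
rewrite -{2}(subnK d_le) exprD mulrC ler_wpM2l ?exprn_ge0 //.
by rewrite lerXn2r // nnegrE.
Qed.

Lemma majority_wrong_bits (h : nat) (y : bits (2 * h)) (g : bool) :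
  majority y = ~~ g -> (h <= #|[pred i | y i != g]|)%N.
Proof.
have split_card : (#|[pred i | y i == g]| + #|[pred i | y i != g]| = 2 * h)%N.
  by rewrite -[RHS](card_ord (2 * h)) -(cardC [pred i | y i == g]).
rewrite /majority; case: g split_card => /= split_card maj.
- have ones : #|[set i | y i]| = #|[pred i | y i == true]|.
    by apply: eq_card => i; rewrite !inE eqb_id.
  move/negbT: maj; rewrite ones; move: split_card.
  by move: #|_| #|_| => a b; lia.
- have ones : #|[set i | y i]| = #|[pred i | y i != false]|.
    by apply: eq_card => i; rewrite !inE; case: (y i).
  move: maj; rewrite ones; move: split_card.
  by move: #|_| #|_| => a b; lia.
Qed.

Section MajorityError.
Variables (F : realFieldType) (w : bool -> F) (g : bool).
Hypotheses (w_ge0 : forall b, 0 <= w b) (w_sum : w false + w true = 1).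

Lemma prod_wrong_majority_le h (y : bits (2 * h)) :
  w (~~ g) <= w g -> majority y = ~~ g -> \prod_i w (y i) <= (w (~~ g) * w g) ^+ h.
Proof.
move=> le_w /majority_wrong_bits wrong.
rewrite (bigID (fun i => y i != g)) /=.
rewrite (eq_bigr (fun=> w (~~ g))) => [|i]; last by case: (y i); case: g.
rewrite [X in _ * X](eq_bigr (fun=> w g)) => [|i]; last by rewrite negbK => /eqP ->.
rewrite !prodr_const; apply: expr_mixed_le => //.
by rewrite -[RHS](card_ord (2 * h)) -(cardC [pred i | y i != g]).
Qed.

Lemma wrong_majority_mass_le h (p : F) :
  1 / 2 < p -> p <= w g ->
  \sum_(y : bits (2 * h) | majority y == ~~ g) \prod_i w (y i)
    <= (1 - 4 * (p - 1 / 2) ^+ 2) ^+ h.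
Proof.
move=> p_gt p_le.
have w_sum_g : w (~~ g) + w g = 1 by case: g; rewrite /= // addrC.
have le_w : w (~~ g) <= w g by lra.
apply: le_trans (_ : \sum_(y : bits (2 * h)) (w (~~ g) * w g) ^+ h <= _).
  apply: le_trans (_ : \sum_(y : bits (2 * h) | majority y == ~~ g) (w (~~ g) * w g) ^+ h <= _).
    by apply: ler_sum => y /eqP; apply: prod_wrong_majority_le.
  rewrite [X in _ <= X](bigID (fun y => majority y == ~~ g)) /= lerDl.
  by apply: sumr_ge0 => y _; rewrite exprn_ge0 // mulr_ge0.
rewrite sumr_const card_ffun card_ord card_bool expnM -[X in X <= _]mulr_natr natrX -exprMn.
(* 4 q (1 - q) = 1 - (2 q - 1) ^ 2 decreases in q >= 1/2 *)
have prod_le : w (~~ g) * w g * 4 <= 1 - 4 * (p - 1 / 2) ^+ 2.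
  have : 0 <= (w g - p) * (w g + p - 1) by apply: mulr_ge0; lra.
  nra.
have prod_ge0 : 0 <= w (~~ g) * w g * 4 by rewrite !mulr_ge0.
rewrite (_ : (2 ^ 2)%:R = 4 :> F) //.
by apply: lerXn2r; rewrite ?nnegrE // (le_trans prod_ge0 prod_le).
Qed.

End MajorityError.

Lemma exprB_le_expR (R : realType) (x : R) (h : nat) :
  x <= 1 -> (1 - x) ^+ h <= expR (- (h%:R * x)).
Proof.
move=> x_le1; rewrite -mulrN expRM_natl.
by apply: lerXn2r; rewrite ?nnegrE ?subr_ge0 ?expR_ge0 ?expR_ge1Dx.
Qed.

Lemma majority_rounds_exist (R : realType) (p delta : R) :
  1 / 2 < p -> p < 1 -> 0 < delta ->
  exists h : nat,
    (2 * h)%:R <= 2 * p / (p - 1 / 2) ^+ 2 * Num.max 1 (ln delta^-1) /\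
    (1 - 4 * (p - 1 / 2) ^+ 2) ^+ h <= delta.
Proof.
move=> p_gt p_lt delta_gt0.
set L := Num.max 1 _; set e2 := (p - 1 / 2) ^+ 2.
have e2_gt0 : 0 < e2 by rewrite exprn_gt0 // subr_gt0.
have e2_lt : e2 < 1 / 4 by rewrite /e2 expr2; nra.
have [L_ge1 L_ge_ln] : 1 <= L /\ ln delta^-1 <= L by rewrite !le_max !lexx orbT.
set x := L / (4 * e2).
have x_ge0 : 0 <= x by rewrite divr_ge0 // ?mulr_ge0 //; lra.
have ex : x * e2 = L / 4 by rewrite /x; field; rewrite gt_eqF.
set h := (Num.truncn x).+1.
have x_lt : x < h%:R by rewrite truncnS_gt.
have h_le : h%:R <= x + 1 by rewrite -natr1 lerD2r truncn_le.
exists h; split.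
  rewrite natrM mulrAC ler_pdivlMr //; nra.
have e2_le : 4 * e2 <= 1 by lra.
apply: le_trans (exprB_le_expR h e2_le) _.
rewrite -[X in _ <= X](lnK delta_gt0) ler_expR.
move: L_ge_ln; rewrite lnV ?posrE //; nra.
Qed.

Section OracleBranches.
Variables (R : realType) (n : nat).
Variables (O : op R (bits n * bool)%type) (a : bits n -> bool -> R[i]).
Hypothesis O_unitary : unitary O.
Hypothesis O_ket0 :
  forall (x x' : bits n) (b : bool), O (x', b) (x, false) = (x' == x)%:R * a x b.

Lemma oracle_amplitudes_normalized x : `|a x false| ^+ 2 + `|a x true| ^+ 2 = 1.
Proof.
have <- : \sum_k (O k (x, false))^* * O k (x, false) = 1 by rewrite O_unitary eqxx.
transitivity (\sum_(x' : bits n) \sum_(b : bool) `|O (x', b) (x, false)| ^+ 2); last first.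
  by rewrite pair_bigA; apply: eq_bigr => -[x' b] _; rewrite sqr_normc mulrC.
rewrite (bigD1 x) //= [X in _ = _ + X]big1 ?addr0 => [|x' x'_ne].
  by rewrite big_bool /= !O_ket0 eqxx !mul1r addrC.
by apply: big1 => b _; rewrite O_ket0 (negbTE x'_ne) mul0r normr0 expr0n.
Qed.

Lemma sqnorm_majority_branch k x m :
  sqnorm (@majority_branch R n k a x m)
  = (\sum_(y : bits k | majority y == m)
       \prod_i (complex.Re (a x (y i)) ^+ 2 + complex.Im (a x (y i)) ^+ 2))%:C.
Proof.
rewrite /sqnorm rmorph_sum [RHS]big_mkcond /=; apply: eq_bigr => y _.
rewrite /majority_branch normrM exprMn normr_prod -prodrXl rmorph_prod eq_sym.
case: (majority y == m); last by rewrite normr0 expr0n mulr0.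
by rewrite normr1 expr1n mulr1; apply: eq_bigr => i _; rewrite -add_Re2_Im2.
Qed.

Lemma majority_branch_error_le h (f : bits n -> bool) (p : R) x :
  p%:C <= `|a x (f x)| ^+ 2 -> 1 / 2 < p ->
  sqnorm (@majority_branch R n (2 * h) a x (~~ f x)) <= ((1 - 4 * (p - 1 / 2) ^+ 2) ^+ h)%:C.
Proof.
move=> a_ge p_gt.
set w := fun b => complex.Re (a x b) ^+ 2 + complex.Im (a x b) ^+ 2.
have wE b : (w b)%:C = `|a x b| ^+ 2 by rewrite add_Re2_Im2.
rewrite sqnorm_majority_branch lecR.
apply: (wrong_majority_mass_le (w := w) (g := f x)) => //.
- by move=> b; rewrite addr_ge0 ?sqr_ge0.
- have := oracle_amplitudes_normalized x.
  by rewrite -!wE -rmorphD => /(congr1 (@complex.Re R)).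
- by rewrite -lecR wE.
Qed.

End OracleBranches.

Theorem lemma2 (R : realType) :
  exists c : R, 0 < c /\
  forall (n : nat) (A : op R (bits n)) (f : bits n -> bool) (p : R)
         (O : op R (bits n * bool)%type) (a : bits n -> bool -> R[i]) (delta : R),
    unitary A ->
    1 / 2 < p -> p < 1 ->
    bounded_error_oracle f p O a ->
    0 < delta ->
    exists k : nat,
      (k%:R <= c * (2 * p / (p - 1 / 2) ^+ 2) * Num.max 1 (ln (delta^-1))) /\
      let alpha := apply_op A (ket R (zero_bits n)) in
      let psi := @hatA_state R n k A O in
      exists (eta : bits n -> bool -> R[i]) (chi : bits n -> bool -> bits k -> R[i]),
        (forall x m, \sum_y `|chi x m y| ^+ 2 = 1) /\
        (forall x y m, psi (x, (y, m)) = alpha x * eta x m * chi x m y) /\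
        (forall x, f x -> `|eta x false| ^+ 2 <= delta%:C) /\
        (forall x, ~~ f x -> `|eta x true| ^+ 2 <= delta%:C).
Proof.
exists 1; split => [|n A f p O a delta _ p_gt p_lt [O_unitary [O_ket0 a_ge]] delta_gt0].
  exact: ltr01.
have [h [h_le tail_le]] := majority_rounds_exist p_gt p_lt delta_gt0.
exists (2 * h)%N; split; first by rewrite mul1r.
move=> alpha psi; pose branch := @majority_branch R n (2 * h) a.
exists (fun x m => sqrtc (sqnorm (branch x m))).
exists (fun x m => normalize (zero_bits (2 * h)) (branch x m)).
have wrong_le x : `|sqrtc (sqnorm (branch x (~~ f x)))| ^+ 2 <= delta%:C.
  rewrite sqr_norm_sqrtc ?sqnorm_ge0 //.
  apply: le_trans (majority_branch_error_le O_unitary O_ket0 h (a_ge x) p_gt) _.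
  by rewrite lecR.
split; [|split; [|split]] => [x m|x y m|x fx|x fx].
- exact: sqnorm_normalize.
- by rewrite /psi (hatA_stateE O_ket0) -mulrA -normalizeK.
- by have := wrong_le x; rewrite fx.
- by have := wrong_le x; rewrite (negbTE fx).
Qed.
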